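(* Let $\mathcal{Q}^T=\mathrm{CSS}(\mathcal{C}_1,\mathcal{C}_2)$ be a T-triorthogonal $[[n,k,d]]$ code with $n-k\equiv 0\pmod 2$. Then there exists a binary linear code $\mathcal{C}\subseteq\mathbb{F}_2^n$ such that $\mathcal{Q}^{\rm Sym}=\mathrm{CSS}(\mathcal{C},\mathcal{C})$ is a symmetric CSS code and the pair $(\mathcal{Q}^T,\mathcal{Q}^{\rm Sym})$ is CNOT-transversal (with $\mathcal{Q}^T$ as control and $\mathcal{Q}^{\rm Sym}$ as target).
   Context: A binary matrix $\mathbf{G}=[G_{ij}]\in\mathbb{F}_2^{m\times n}$ is triorthogonal if $\sum_i G_{ai}G_{bi}=0\pmod 2$ for all rows $a\ne b$ and $\sum_i G_{ai}G_{bi}G_{ci}=0\pmod 2$ for all distinct rows $a,b,c$. Writing $\mathbf{G}=\begin{bmatrix}\mathbf{G}_1\\ \mathbf{G}_0\end{bmatrix}$ (rows assumed linearly independent) with $\mathbf{G}_1$ the $k$ odd-weight rows and $\mathbf{G}_0$ the even-weight rows, the triorthogonal code is $\mathcal{Q}^T=\mathrm{CSS}(\mathcal{C}_1,\mathcal{C}_2)$ with $\mathcal{C}_1$ generated by $\mathbf{G}$ and $\mathcal{C}_2$ the dual of the code generated by $\mathbf{G}_0$. For binary codes with $\mathcal{C}_b^\perp\subset\mathcal{C}_a$, $\mathrm{CSS}(\mathcal{C}_a,\mathcal{C}_b)$ is spanned by $|\bm{\psi}\rangle_L=|\mathcal{C}_b^\perp|^{-1/2}\sum_{\mathbf{y}\in\mathcal{C}_b^\perp}|\bm{\psi}\mathbf{A}+\mathbf{y}\rangle$,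 $\bm{\psi}\in\mathbb{F}_2^k$, where the mapping matrix $\mathbf{A}\in\mathbb{F}_2^{k\times n}$ has rows representing a basis of $\mathcal{C}_a/\mathcal{C}_b^\perp$ (for $\mathcal{Q}^T$, $\mathbf{A}=\mathbf{G}_1$). A CSS code is symmetric if $\mathcal{C}_a=\mathcal{C}_b$. $\mathcal{Q}^T$ is T-triorthogonal if it is Pauli $X$-transversal (applying $\mathbf{X}$ on every physical qubit implements logical $\mathbf{X}$ on every logical qubit); such codes are transversal for $\mathbf{T}=\mathrm{diag}(1,e^{i\pi/4})$. Two codes with $k$ logical qubits on $n$ physical qubits form a CNOT-transversal pair (control first, target second) if, for suitable mapping matrices defining their logical bases, applying physical CNOT from qubit $i$ of the first block to qubit $i$ of the second for all $i$ maps $|\bm{\psi}\rangle_L|\bm{\phi}\rangle_L\mapsto|\bm{\psi}\rangle_L|\bm{\psi}+\bm{\phi}\rangle_L$ for all $\bm{\psi},\bm{\phi}\in\mathbb{F}_2^k$. *)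

(* Binary codes = row spaces of matrices over 'F_2;
   quantum states = amplitude functions on computational basis vectors,
   with amplitudes in algC. *)
From mathcomp Require Import all_boot all_order all_algebra all_field.
Set Implicit Arguments. Unset Strict Implicit. Unset Printing Implicit Defensive.
Import GRing.Theory Num.Theory.
Local Open Scope ring_scope.

Definition triorthogonal m n (G : 'M['F_2]_(m, n)) : Prop :=
  (forall a b : 'I_m, a != b -> \sum_(i < n) G a i * G b i = 0) /\
  (forall a b c : 'I_m, a != b -> b != c -> a != c ->
      \sum_(i < n) G a i * G b i * G c i = 0).

Definition weight n (v : 'rV['F_2]_n) : nat := #|[set i | v 0 i != 0]|.

Definition dual_code p n (C : 'M['F_2]_(p, n)) : 'M['F_2]_n := kermx C^T.

Definition code_card p n (D : 'M['F_2]_(p, n)) : nat :=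
  #|[set y : 'rV['F_2]_n | (y <= D)%MS]|.

(* n-qubit states (amplitudes on basis |x>), two-block states on 2n qubits. *)
Definition state n := 'rV['F_2]_n -> algC.
Definition state2 n := 'rV['F_2]_n -> 'rV['F_2]_n -> algC.

(* |psi>_L = |D|^{-1/2} sum_{y in D} |psi A + y>  with D = C_b^perp *)
Definition CSS_state k p n (A : 'M['F_2]_(k, n)) (Cb : 'M['F_2]_(p, n))
    (psi : 'rV['F_2]_k) : state n :=
  fun x => if (x - psi *m A <= dual_code Cb)%MS
           then (sqrtC (code_card (dual_code Cb))%:R)^-1 else 0.

(* CSS(Ca, Cb) is well defined: Cb^perp is contained in Ca. *)
Definition is_CSS pa pb n (Ca : 'M['F_2]_(pa, n)) (Cb : 'M['F_2]_(pb, n)) :=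
  (dual_code Cb <= Ca)%MS.

(* the rows of A represent a basis of Ca / Cb^perp *)
Definition is_mapping_matrix k pa pb n (Ca : 'M['F_2]_(pa, n))
    (Cb : 'M['F_2]_(pb, n)) (A : 'M['F_2]_(k, n)) : bool :=
  ((A + dual_code Cb)%MS == Ca)%MS &&
  (\rank (A + dual_code Cb)%MS == (k + \rank (dual_code Cb))%N).

Definition tensor n (f g : state n) : state2 n := fun x y => f x * g y.
(* transversal CNOT: |x>|y> |-> |x>|x+y> *)
Definition cnot_all n (F : state2 n) : state2 n := fun x y => F x (y - x).
(* transversal X: |x> |-> |x + 1> *)
Definition X_all n (f : state n) : state n := fun x => f (x - const_mx 1).

Definition triorthogonal_split k m0 n (G1 : 'M['F_2]_(k, n))
    (G0 : 'M['F_2]_(m0, n)) : Prop :=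
  [/\ triorthogonal (col_mx G1 G0), row_free (col_mx G1 G0),
      (forall a, odd (weight (row a G1))) &
      (forall a, ~~ odd (weight (row a G0)))].

(* Q^T = CSS(C1, C2), C1 = rowspace [G1;G0], C2 = (rowspace G0)^perp,
   logical basis given by A = G1. *)
Definition QT_C1 k m0 n (G1 : 'M['F_2]_(k, n)) (G0 : 'M['F_2]_(m0, n)) :=
  col_mx G1 G0.
Definition QT_C2 m0 n (G0 : 'M['F_2]_(m0, n)) := dual_code G0.

(* Q^T is T-triorthogonal: transversal X implements logical X on all qubits. *)
Definition T_triorthogonal k m0 n (G1 : 'M['F_2]_(k, n))
    (G0 : 'M['F_2]_(m0, n)) : Prop :=
  forall psi : 'rV['F_2]_k,
    X_all (CSS_state G1 (QT_C2 G0) psi) =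
    CSS_state G1 (QT_C2 G0) (psi + const_mx 1).

(* CNOT-transversality for given logical bases (A1 for code 1 = control,
   A2 for code 2 = target). *)
Definition cnot_transversal_with k p1 p2 n (A1 : 'M['F_2]_(k, n))
    (Cb1 : 'M['F_2]_(p1, n)) (A2 : 'M['F_2]_(k, n)) (Cb2 : 'M['F_2]_(p2, n))
    : Prop :=
  forall psi phi : 'rV['F_2]_k,
    cnot_all (tensor (CSS_state A1 Cb1 psi) (CSS_state A2 Cb2 phi)) =
    tensor (CSS_state A1 Cb1 psi) (CSS_state A2 Cb2 (psi + phi)).

(** Triorthogonality makes the rows of [G1] orthonormal and those of [G0]
    self-orthogonal and orthogonal to [G1]; T-triorthogonality puts the
    all-ones vector in the row space of [[G1; G0]], so every vector
    orthogonal to that space has even weight and is therefore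
    self-orthogonal.  Hence [G0] can be enlarged, one vector at a time, to a
    self-orthogonal code [D] orthogonal to [G1] with [2 dim D + k = n].  The
    code [C = D^perp] then satisfies [C^perp = D <= C], [G1] is a mapping
    matrix for [CSS(C, C)], and since both codes have logical basis [G1] and
    the coset space [span G0] of the control is contained in the coset space
    [D] of the target, transversal CNOT acts as logical CNOT. *)

From mathcomp Require Import all_boot all_order all_algebra all_field.
From mathcomp Require Import zify.
From Stdlib Require Import FunctionalExtensionality.
Set Implicit Arguments.
Unset Strict Implicit.
Unset Printing Implicit Defensive.
Import GRing.Theory Num.Theory.
Local Open Scope ring_scope.

Lemma F2_mulrr (x : 'F_2) : x * x = x.
Proof. by case: x => [[|[|]] //= ?]; apply/val_inj. Qed.

Lemma F2_natr m : (m%:R : 'F_2) = (odd m)%:R.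
Proof. by rewrite -modn2 (Fp_nat_mod (isT : prime 2)). Qed.

Lemma F2_sum_weight n (v : 'rV['F_2]_n) :
  \sum_(i < n) v 0 i = (odd (weight v))%:R.
Proof.
rewrite -F2_natr /weight -sum1_card natr_sum [RHS]big_mkcond /=.
apply: eq_bigr => i _; rewrite inE.
by case: (v 0 i) => [[|[|]] //= ?]; apply/val_inj.
Qed.

Lemma triorthogonal_gram m n (G : 'M['F_2]_(m, n)) (a b : 'I_m) :
  triorthogonal G ->
  (G *m G^T) a b = ((a == b) && odd (weight (row a G)))%:R.
Proof.
case=> Gpair _; rewrite mxE; case: eqVneq => [<-|neq_ab]; last first.
  rewrite /= mulr0n -[RHS](Gpair a b neq_ab).
  by apply: eq_bigr => i _; rewrite mxE.
rewrite /= -F2_sum_weight; apply: eq_bigr => i _.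
by rewrite !mxE F2_mulrr.
Qed.

Lemma triorthogonal_split_gram k m0 n (G1 : 'M['F_2]_(k, n))
    (G0 : 'M['F_2]_(m0, n)) :
  triorthogonal_split G1 G0 ->
  [/\ G1 *m G1^T = 1%:M, G0 *m G0^T = 0 & G0 *m G1^T = 0].
Proof.
case=> trio _ G1_odd G0_even.
have gram i j := triorthogonal_gram i j trio.
rewrite tr_col_mx mul_col_mx !mul_mx_row in gram.
split; apply/matrixP => a b; rewrite [RHS]mxE.
- move: (gram (lshift m0 a) (lshift m0 b)).
  by rewrite block_mxEul (inj_eq (@lshift_inj _ _)) rowKu G1_odd andbT.
- move: (gram (rshift k a) (rshift k b)).
  by rewrite block_mxEdr rowKd (negbTE (G0_even a)) andbF.
- by move: (gram (rshift k a) (lshift m0 b)); rewrite block_mxEdl eq_rlshift.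
Qed.

Lemma orthogonal_sym m1 m2 n (A : 'M['F_2]_(m1, n)) (B : 'M['F_2]_(m2, n)) :
  A *m B^T = 0 -> B *m A^T = 0.
Proof. by move=> AB; rewrite -[B]trmxK -trmx_mul AB trmx0. Qed.

Lemma sub_dual_code q p n (A : 'M['F_2]_(q, n)) (M : 'M['F_2]_(p, n)) :
  (A <= dual_code M)%MS = (A *m M^T == 0).
Proof. exact: sub_kermx. Qed.

Lemma mxrank_dual_code p n (M : 'M['F_2]_(p, n)) :
  \rank (dual_code M) = (n - \rank M)%N.
Proof. by rewrite mxrank_ker mxrank_tr. Qed.

Lemma dual_codeK p n (M : 'M['F_2]_(p, n)) : (dual_code (dual_code M) :=: M)%MS.
Proof.
have sub_M : (M <= dual_code (dual_code M))%MS.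
  by rewrite sub_dual_code orthogonal_sym // mulmx_ker.
apply/eqmx_sym/eqmxP; rewrite -(mxrank_leqif_eq sub_M).2.
by rewrite !mxrank_dual_code subKn ?rank_leq_col.
Qed.

Lemma mul_trmx_col_mx_eq0 p m1 m2 n (v : 'M['F_2]_(p, n))
    (A : 'M_(m1, n)) (B : 'M_(m2, n)) :
  (v *m (col_mx A B)^T == 0) = (v *m A^T == 0) && (v *m B^T == 0).
Proof. by rewrite tr_col_mx mul_mx_row row_mx_eq0. Qed.

Lemma self_orthogonal_of_all_ones m n (M : 'M['F_2]_(m, n)) (v : 'rV_n) :
  ((const_mx 1 : 'rV_n) <= M)%MS -> v *m M^T = 0 -> v *m v^T = 0.
Proof.
case/submxP=> a def1 vM.
have -> : v *m v^T = v *m (const_mx 1)^T.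
  apply/matrixP => i j; rewrite !mxE; apply: eq_bigr => l _.
  by rewrite !mxE !ord1 F2_mulrr mulr1.
by rewrite def1 trmx_mul mulmxA vM mul0mx.
Qed.

Lemma code_card_gt0 p n (D : 'M['F_2]_(p, n)) : (0 < code_card D)%N.
Proof. by apply/card_gt0P; exists 0; rewrite inE sub0mx. Qed.

Lemma T_triorthogonal_all_ones k m0 n (G1 : 'M['F_2]_(k, n))
    (G0 : 'M['F_2]_(m0, n)) :
  T_triorthogonal G1 G0 -> ((const_mx 1 : 'rV_n) <= QT_C1 G1 G0)%MS.
Proof.
move=> XL; set x1 : 'rV_n := const_mx 1 *m G1.
have x1_1 : (x1 - const_mx 1 <= G0)%MS.
  have := congr1 (fun f => f x1) (XL 0).
  rewrite /X_all /CSS_state mul0mx subr0 add0r subrr sub0mx /QT_C2 !dual_codeK.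
  case: ifP => // _ /esym/eqP.
  by rewrite invr_eq0 sqrtC_eq0 pnatr_eq0 gtn_eqF ?code_card_gt0.
suff: ((const_mx 1 : 'rV_n) <= G1 + G0)%MS by rewrite /QT_C1 addsmxE.
rewrite -[const_mx 1](subKr x1) addmx_sub ?eqmx_opp //.
  exact: submx_trans (submxMl _ _) (addsmxSl G1 G0).
exact: submx_trans x1_1 (addsmxSr G1 G0).
Qed.

Section SelfOrthogonalExtension.

Variables (k n : nat) (G1 : 'M['F_2]_(k, n)).
Hypothesis G1_orthonormal : G1 *m G1^T = 1%:M.

Lemma mxrank_orthonormal : \rank G1 = k.
Proof.
apply/eqP; rewrite eqn_leq rank_leq_row -{1}(mxrank1 'F_2 k) -G1_orthonormal.
exact: mxrankM_maxl.
Qed.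

Lemma mxrank_col_orthonormal m (D : 'M['F_2]_(m, n)) :
  D *m G1^T = 0 -> \rank (col_mx G1 D) = (k + \rank D)%N.
Proof.
move=> DG1; rewrite -addsmxE -[in RHS]mxrank_orthonormal.
apply/mxrank_disjoint_sum/eqP/rowV0P => w.
rewrite sub_capmx => /andP[/submxP[a ->] /submxP[b wD]].
have : a *m G1 *m G1^T = 0 by rewrite wD -mulmxA DG1 mulmx0.
by rewrite -mulmxA G1_orthonormal mulmx1 => ->; rewrite mul0mx.
Qed.

Lemma self_orthogonal_rank_bound m (D : 'M['F_2]_(m, n)) :
  D *m D^T = 0 -> D *m G1^T = 0 -> ((\rank D).*2 + k <= n)%N.
Proof.
move=> DD DG1; have : (D <= dual_code (col_mx G1 D))%MS.
  by rewrite sub_dual_code mul_trmx_col_mx_eq0 DD DG1 !eqxx.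
move/mxrankS; rewrite mxrank_dual_code mxrank_col_orthonormal //.
have := rank_leq_col D; have := rank_leq_col G1; rewrite mxrank_orthonormal.
lia.
Qed.

Lemma self_orthogonal_step m (D : 'M['F_2]_(m, n)) :
  ((const_mx 1 : 'rV_n) <= col_mx G1 D)%MS -> D *m G1^T = 0 ->
  ((\rank D).*2 + k < n)%N ->
  exists2 v : 'rV_n, ~~ (v <= D)%MS & v *m (col_mx G1 D)^T = 0.
Proof.
move=> ones DG1 small; set U := dual_code (col_mx G1 D).
have : ~~ (U <= D)%MS.
  apply: contraTN small => /mxrankS.
  by rewrite mxrank_dual_code mxrank_col_orthonormal //; lia.
case/row_subPn => i notD; exists (row i U) => //.
by apply/eqP; rewrite -sub_dual_code row_sub.
Qed.

Lemma self_orthogonal_extension m (D : 'M['F_2]_(m, n)) :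
  ((const_mx 1 : 'rV_n) <= col_mx G1 D)%MS ->
  D *m D^T = 0 -> D *m G1^T = 0 ->
  exists m' (D' : 'M['F_2]_(m', n)),
    [/\ (D <= D')%MS, D' *m D'^T = 0, D' *m G1^T = 0
      & ((\rank D').*2 + k = n)%N].
Proof.
have [N] := ubnP (n - \rank D); elim: N => // N IH in m D *.
move=> ltN ones DD DG1.
have := self_orthogonal_rank_bound DD DG1; rewrite leq_eqVlt.
case/orP => [/eqP full|small]; first by exists m, D.
have [v notD vGD] := self_orthogonal_step ones DG1 small.
have vv : v *m v^T = 0 := self_orthogonal_of_all_ones ones vGD.
move/eqP: vGD; rewrite mul_trmx_col_mx_eq0 => /andP[/eqP vG1 /eqP vD].
set Dv := col_mx D v.
have D_Dv : (D <= Dv)%MS by rewrite -addsmxE addsmxSl.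
have rank_Dv : (\rank D < \rank Dv)%N.
  by apply: rank_ltmx; rewrite ltmxE D_Dv col_mx_sub submx_refl.
have ones_Dv : ((const_mx 1 : 'rV_n) <= col_mx G1 Dv)%MS.
  apply: submx_trans ones _; rewrite -!addsmxE.
  by apply: addsmxS => //; rewrite addsmxE.
have DvDv : Dv *m Dv^T = 0.
  rewrite tr_col_mx mul_col_mx !mul_mx_row DD vD vv orthogonal_sym //.
  by rewrite !row_mx0 col_mx0.
have DvG1 : Dv *m G1^T = 0 by rewrite mul_col_mx DG1 vG1 col_mx0.
have ltN_Dv : (n - \rank Dv < N)%N by have := rank_leq_col Dv; lia.
have [m' [D' [Dv_D' *]]] := IH _ Dv ltN_Dv ones_Dv DvDv DvG1.
by exists m', D'; split=> //; apply: submx_trans D_Dv Dv_D'.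
Qed.

End SelfOrthogonalExtension.

Lemma is_CSS_dual_self_orthogonal m n (D : 'M['F_2]_(m, n)) :
  D *m D^T = 0 -> is_CSS (dual_code D) (dual_code D).
Proof. by move=> DD; rewrite /is_CSS dual_codeK sub_dual_code DD. Qed.

Lemma is_mapping_matrix_dual k m n (G1 : 'M['F_2]_(k, n))
    (D : 'M['F_2]_(m, n)) :
  G1 *m G1^T = 1%:M -> D *m D^T = 0 -> D *m G1^T = 0 ->
  ((\rank D).*2 + k = n)%N ->
  is_mapping_matrix (dual_code D) (dual_code D) G1.
Proof.
move=> G1G1 DD DG1 full; rewrite /is_mapping_matrix.
have G1_DD := adds_eqmx (eqmx_refl G1) (dual_codeK D).
rewrite !G1_DD !addsmxE (dual_codeK D).1 mxrank_col_orthonormal // eqxx andbT.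
have sub_dual : (col_mx G1 D <= dual_code D)%MS.
  by rewrite sub_dual_code mul_col_mx orthogonal_sym // DD col_mx0.
rewrite -(mxrank_leqif_eq sub_dual).2 mxrank_col_orthonormal //.
rewrite mxrank_dual_code; apply/eqP; lia.
Qed.

Lemma addmx_subl m n (D : 'M['F_2]_(m, n)) (u w : 'rV_n) :
  (u <= D)%MS -> ((u + w)%R <= D)%MS = (w <= D)%MS.
Proof.
move=> uD; apply/idP/idP => [uwD|]; last exact: addmx_sub uD.
by rewrite -(addKr u w) addmx_sub // eqmx_opp.
Qed.

Lemma cnot_transversal_common_basis k p1 p2 n (A : 'M['F_2]_(k, n))
    (Cb1 : 'M['F_2]_(p1, n)) (Cb2 : 'M['F_2]_(p2, n)) :
  (dual_code Cb1 <= dual_code Cb2)%MS -> cnot_transversal_with A Cb1 A Cb2.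
Proof.
move=> sub12 psi phi; apply: functional_extensionality => x.
apply: functional_extensionality => y; rewrite /cnot_all /tensor /CSS_state.
case x_psi : (x - psi *m A <= dual_code Cb1)%MS; last by rewrite !mul0r.
have -> : y - (psi + phi) *m A = (x - psi *m A) + (y - x - phi *m A).
  rewrite mulmxDl opprD addrA [RHS]addrA; congr (_ - _).
  by rewrite [RHS]addrC addrA subrK.
by rewrite (addmx_subl _ (submx_trans x_psi sub12)).
Qed.

Theorem theorem2 (k m0 n : nat) (G1 : 'M['F_2]_(k, n)) (G0 : 'M['F_2]_(m0, n)) :
  triorthogonal_split G1 G0 ->
  T_triorthogonal G1 G0 ->
  ((n - k) %% 2 = 0)%N ->
  exists C : 'M['F_2]_n,
    is_CSS C C /\
    exists A2 : 'M['F_2]_(k, n),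
      is_mapping_matrix C C A2 /\
      cnot_transversal_with G1 (QT_C2 G0) A2 C.
Proof.
(* The parity hypothesis is implied by the others: see [full] below. *)
move=> split_G XL _.
have [G1G1 G0G0 G0G1] := triorthogonal_split_gram split_G.
have ones := T_triorthogonal_all_ones XL.
have [m [D [G0D DD DG1 full]]] := self_orthogonal_extension G1G1 ones G0G0 G0G1.
exists (dual_code D); split; first exact: is_CSS_dual_self_orthogonal.
exists G1; split; first exact: is_mapping_matrix_dual.
by apply: cnot_transversal_common_basis; rewrite /QT_C2 !dual_codeK.
Qed.
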